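(* Consider the game of degree $d = 3$ in which Nora and Wanda choose the polynomial coefficients from $\mathbb{Q}$. If Nora makes the last move, she can ensure that the final polynomial has no root in any abelian extension of $\mathbb{Q}$.
   Context: The game: Nora and Wanda alternately choose coefficients of $f(x) = a_3 x^3 + a_2 x^2 + a_1 x + a_0$; on each move the current player picks a not-yet-chosen coefficient and assigns it a rational value, subject to $a_3 \neq 0$, $a_0 \neq 0$. An abelian extension of $\mathbb{Q}$ is a Galois extension (inside a fixed algebraic closure) with abelian Galois group. *)

From HB Require Import structures.
From mathcomp Require Import all_boot all_order all_algebra all_fingroup all_solvable all_field.
Set Implicit Arguments. Unset Strict Implicit. Unset Printing Implicit Defensive.
Import GRing.Theory.
Local Open Scope ring_scope.

(* Game state for degree 3: coefficient a_i (i : 'I_4) is either not yet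
   chosen (None) or has been assigned the rational value c (Some c). *)
Definition state := 'I_4 -> option rat.

Definition init_state : state := fun _ => None.

Definition legal_move (s : state) (i : 'I_4) (c : rat) : Prop :=
  s i = None /\ (((i : nat) == 0%N) || ((i : nat) == 3%N) -> c != 0).

Definition play (s : state) (i : 'I_4) (c : rat) : state :=
  fun j => if j == i then Some c else s j.

(* The polynomial a_3 x^3 + a_2 x^2 + a_1 x + a_0 (unchosen coefficients
   are read as 0; after the four moves of the game all are chosen). *)
Definition state_poly (s : state) : {poly rat} :=
  \sum_(i < 4) (odflt 0 (s i))%:P * 'X^i.

(* p has a root in some abelian extension of Q: a field extension E of Q
   (realised as a subfield of a splitting-field extension L of Q) which is
   Galois over Q with abelian Galois group, containing a root of p. *)
Definition has_root_in_abelian_ext (p : {poly rat}) : Prop :=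
  exists (L : splittingFieldType rat) (E : {subfield L}) (x : L),
    [/\ galois 1%AS E, abelian 'Gal(E / 1%AS), x \in E
      & root (map_poly (in_alg L) p) x].

(* Nora keeps the final cubic f free of rational roots, hence irreducible, and
   makes its discriminant negative.  If f had a root x in an abelian extension E
   of Q, then Q(x) would be Galois over Q, as the fixed field of a subgroup of the
   abelian group Gal(E/Q); so Q(x) would contain a second root y = g(x) with g in
   Q[X].  The discriminant of f is the square of a polynomial expression in x and
   y, hence disc f = h(x)^2 for some h in Q[X], so f divides h^2 - disc f, and
   evaluating at a real root of f gives disc f >= 0.
   Nora first sets a middle coefficient to 0.  On her last move she picks
   - a constant term M + 1/l, with l a large prime, so that after clearing
     denominators the reversed cubic is Eisenstein at l, while the discriminant,
     a quadratic in the constant term with leading coefficient -27a^2, is negative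
     for M large;
   - a leading coefficient, by the same choice for the reversed cubic;
   - a linear coefficient c = n numq(a) with n > |numq(d)|: then ac > 0, so
     disc = -4ac^3 - 27a^2d^2 < 0 and every real root r satisfies |rc| <= |d|, whereas
     by the rational root theorem a rational root has |r| >= 1/(|numq a| denq d). *)

From HB Require Import structures.
From mathcomp Require Import all_boot all_order all_algebra all_fingroup all_solvable all_field.
From mathcomp Require Import polyrcf realalg.
From mathcomp Require Import ring lra zify.
Set Implicit Arguments. Unset Strict Implicit. Unset Printing Implicit Defensive.
Import Order.TTheory GRing.Theory Num.Theory.
Local Open Scope ring_scope.

Definition cubic {R : nzRingType} (a b c d : R) : {poly R} :=
  a%:P * 'X^3 + b%:P * 'X^2 + c%:P * 'X + d%:P.

Lemma horner_cubic (R : comNzRingType) (a b c d x : R) :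
  (cubic a b c d).[x] = a * x ^+ 3 + b * x ^+ 2 + c * x + d.
Proof. by rewrite !hornerE. Qed.

Lemma horner_cubic0 (R : comNzRingType) (a b c d : R) : (cubic a b c d).[0] = d.
Proof. by rewrite horner_cubic !expr0n !mulr0 !add0r. Qed.

Lemma map_cubic (R S : nzRingType) (f : {rmorphism R -> S}) (a b c d : R) :
  map_poly f (cubic a b c d) = cubic (f a) (f b) (f c) (f d).
Proof. by rewrite !(rmorphD, rmorphM, rmorphXn) /= !map_polyC map_polyX. Qed.

Lemma size_cubic (R : comNzRingType) (a b c d : R) :
  a != 0 -> size (cubic a b c d) = 4.
Proof.
move=> a0; have -> : cubic a b c d = Poly [:: d; c; b; a].
  by rewrite /cubic /= !cons_poly_def; ring.
by rewrite (PolyK (c := 0)).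
Qed.

Lemma horner_cubic_rev (F : fieldType) (a b c d x : F) : x != 0 ->
  (cubic d c b a).[x^-1] = (cubic a b c d).[x] / x ^+ 3.
Proof. by move=> x0; rewrite !horner_cubic; field. Qed.

Definition disc {R : comNzRingType} (a b c d : R) : R :=
  18%:R * a * b * c * d - 4%:R * b ^+ 3 * d + b ^+ 2 * c ^+ 2
  - 4%:R * a * c ^+ 3 - 27%:R * a ^+ 2 * d ^+ 2.

(* With the third root z = - b / a - x - y, the last two factors are a (y - z)
   and a (z - x). *)
Definition disc_sqrt {R : comNzRingType} (a b x y : R) : R :=
  (x - y) * (2%:R * a * y + a * x + b) * (2%:R * a * x + a * y + b).

Lemma disc_rev (R : comNzRingType) (a b c d : R) : disc d c b a = disc a b c d.
Proof. by rewrite /disc; ring. Qed.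

Lemma rmorph_disc (R S : comNzRingType) (f : {rmorphism R -> S}) (a b c d : R) :
  f (disc a b c d) = disc (f a) (f b) (f c) (f d).
Proof. by rewrite /disc !(rmorph_nat, rmorphM, rmorphXn, rmorphB, rmorphD). Qed.

Lemma rmorph_disc_sqrt (R S : comNzRingType) (f : {rmorphism R -> S}) (a b x y : R) :
  f (disc_sqrt a b x y) = disc_sqrt (f a) (f b) (f x) (f y).
Proof. by rewrite /disc_sqrt !(rmorph_nat, rmorphM, rmorphB, rmorphD). Qed.

Lemma sqr_disc_sqrt (R : idomainType) (a b c d x y : R) :
  root (cubic a b c d) x -> root (cubic a b c d) y -> x != y ->
  disc_sqrt a b x y ^+ 2 = disc a b c d.
Proof.
rewrite /root !horner_cubic => /eqP px /eqP py xy.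
have ec : c = - (a * (x ^+ 2 + x * y + y ^+ 2)) - b * (x + y).
  have : (x - y) * (a * (x ^+ 2 + x * y + y ^+ 2) + b * (x + y) + c)
         = (a * x ^+ 3 + b * x ^+ 2 + c * x + d) - (a * y ^+ 3 + b * y ^+ 2 + c * y + d).
    by ring.
  move/eqP; rewrite px py subrr mulf_eq0 subr_eq0 (negbTE xy) addrC addr_eq0 opprD.
  by move/eqP.
have ed : d = - (a * x ^+ 3 + b * x ^+ 2 + c * x) by rewrite -[d]subr0 -px; ring.
by rewrite /disc /disc_sqrt ed ec; ring.
Qed.

Lemma minPoly1_eqp (F : fieldType) (L : fieldExtType F) (p : {poly F}) (x : L) :
  irreducible_poly p -> root (map_poly (in_alg L) p) x ->
  minPoly 1%AS x %= map_poly (in_alg L) p.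
Proof.
move=> irr_p px; have /polyOver1P[m Dm] := minPolyOver 1%AS x.
have : minPoly 1%AS x %| map_poly (in_alg L) p.
  by apply: minPoly_dvdp => //; apply/polyOver1P; exists p.
rewrite Dm dvdp_map eqp_map => mp.
case: irr_p => _ /(_ m); apply=> //.
by rewrite -(size_map_poly (in_alg L)) -Dm size_minPoly.
Qed.

Lemma irreducible_dvdp_root (F : fieldType) (L : fieldExtType F) (p q : {poly F}) (x : L) :
  irreducible_poly p -> root (map_poly (in_alg L) p) x ->
  root (map_poly (in_alg L) q) x -> p %| q.
Proof.
move=> irr_p px qx; rewrite -(dvdp_map (in_alg L)) -(eqp_dvdl _ (minPoly1_eqp irr_p px)).
by apply: minPoly_dvdp => //; apply/polyOver1P; exists q.
Qed.

Lemma abelian_galois_sub (F : fieldType) (L : splittingFieldType F) (K M E : {subfield L}) :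
  galois K E -> abelian 'Gal(E / K) -> (K <= M <= E)%VS -> galois K M.
Proof.
move=> galKE abKE /andP[sKM sME].
have galME : galois M E by apply: galoisS galKE; rewrite sKM sME.
have nsG : ('Gal(E / M) <| 'Gal(E / K))%g by rewrite -sub_abelian_normal ?galS.
by rewrite -(galois_fixedField galME) normal_fixedField_galois.
Qed.

Lemma galois_adjoin_conjugate (F : fieldType) (L : splittingFieldType F)
    (K : {subfield L}) (x : L) :
  galois K <<K; x>> -> (2 < size (minPoly K x))%N ->
  exists2 y, y \in <<K; x>>%VS & root (minPoly K x) y && (y != x).
Proof.
case/and3P=> _ sepKx /normalFieldP/(_ x (memv_adjoin K x))[r /allP rKx Dm] sz_m.
have uniq_r : uniq r.
  by rewrite -separable_prod_XsubC -Dm -[_ (minPoly K x)]/(separable_element K x)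
             adjoin_separable_eq.
have /hasP[y ry yx] : has (predC1 x) r.
  apply/hasPn=> all_x; have : (size r <= size [:: x])%N.
    by apply: uniq_leq_size => // z /all_x /negPn; rewrite inE.
  by move: sz_m; rewrite Dm size_prod_XsubC /=; lia.
by exists y; [apply: rKx | rewrite Dm root_prod_XsubC ry].
Qed.

Lemma dvdp_sqr_subC_ge0 (R : rcfType) (p h : {poly R}) (k : R) :
  ~~ odd (size p) -> p %| h ^+ 2 - k%:P -> 0 <= k.
Proof.
move=> p_even /root_dvdp; have [r pr] := odd_poly_root p_even.
by move/(_ r pr); rewrite /root !hornerE subr_eq0 => /eqP <-; apply: sqr_ge0.
Qed.

Lemma abelian_root_disc_sqr (a b c d : rat) : a != 0 ->
  irreducible_poly (cubic a b c d) -> has_root_in_abelian_ext (cubic a b c d) ->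
  exists h : {poly rat}, cubic a b c d %| h ^+ 2 - (disc a b c d)%:P.
Proof.
move=> a0 irr_p [L [E [x [galE abE xE px]]]].
have sz_m : (2 < size (minPoly 1%AS x))%N.
  by rewrite (eqp_size (minPoly1_eqp irr_p px)) size_map_poly size_cubic.
have galx : galois 1%AS <<1%AS; x>>.
  by apply: abelian_galois_sub galE abE _; rewrite sub1v; apply/FadjoinP; rewrite sub1v.
have [y xy /andP[my yx]] := galois_adjoin_conjugate galx sz_m.
have /Fadjoin_polyP[_ /polyOver1P[g ->] Dy] := xy.
have py : root (map_poly (in_alg L) (cubic a b c d)) y.
  by rewrite -(eqp_root (minPoly1_eqp irr_p px)).
pose h := disc_sqrt a%:P b%:P 'X g.
have hx : (map_poly (in_alg L) h).[x] = disc_sqrt (in_alg L a) (in_alg L b) x y.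
  have := rmorph_disc_sqrt (horner_eval x \o map_poly (in_alg L)) a%:P b%:P 'X g.
  by rewrite /= !horner_evalE !map_polyC map_polyX !hornerC hornerX -Dy.
exists h; apply: (irreducible_dvdp_root irr_p px).
rewrite map_cubic in px py.
rewrite /root rmorphB rmorphXn /= map_polyC !hornerE hx.
by rewrite (sqr_disc_sqrt px py) 1?eq_sym // -(rmorph_disc (in_alg L)) subrr.
Qed.

Definition winning_cubic (a b c d : rat) : Prop :=
  [/\ a != 0, forall r : rat, ~~ root (cubic a b c d) r & disc a b c d < 0].

Lemma winning_cubic_no_abelian_root (a b c d : rat) :
  winning_cubic a b c d -> ~ has_root_in_abelian_ext (cubic a b c d).
Proof.
case=> a0 no_root disc_lt0 /(abelian_root_disc_sqr a0)[|h].
  by apply: cubic_irreducible; rewrite ?size_cubic.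
pose f : {rmorphism rat -> realalg} := ratr.
rewrite -(dvdp_map f) rmorphB rmorphXn /= map_polyC => /dvdp_sqr_subC_ge0.
by rewrite size_map_poly size_cubic // ler0q leNgt disc_lt0 => /(_ isT).
Qed.

Lemma winning_cubic_rev (a b c d : rat) : winning_cubic a b c d -> winning_cubic d c b a.
Proof.
case=> a0 no_root disc_lt0; split; last by rewrite disc_rev.
- by apply: contraNneq (no_root 0) => d0; rewrite /root horner_cubic0 d0.
- move=> r; have [->|r0] := eqVneq r 0; first by rewrite /root horner_cubic0.
  rewrite /root -[r]invrK horner_cubic_rev ?invr_eq0 // mulf_eq0 negb_or.
  by rewrite no_root invr_eq0 expf_eq0 invr_eq0 (negbTE r0) andbF.
Qed.

Lemma root_cubic_clear (a b c d r : rat) : root (cubic a b c d) r ->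
  numq a * denq b * denq c * denq d * numq r ^+ 3
  + numq b * denq a * denq c * denq d * numq r ^+ 2 * denq r
  + numq c * denq a * denq b * denq d * numq r * denq r ^+ 2
  + numq d * denq a * denq b * denq c * denq r ^+ 3 = 0.
Proof.
rewrite /root horner_cubic => /eqP pr; apply/eqP.
rewrite -[a]divq_num_den -[b]divq_num_den -[c]divq_num_den in pr.
rewrite -[d]divq_num_den -[r]divq_num_den in pr.
rewrite -(intr_eq0 rat) -(mulr0 ((denq a * denq b * denq c * denq d * denq r ^+ 3)%:~R)) -pr.
by rewrite !(rmorphD, rmorphM, rmorphXn) /=; apply/eqP; field; rewrite !intr_eq0 !denq_neq0.
Qed.

Lemma denq_root_cubic_dvd (a b c d r : rat) : root (cubic a b c d) r ->
  (denq r %| numq a * denq b * denq c * denq d)%Z.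
Proof.
move/root_cubic_clear; set u := numq r; set v := denq r; set A := _ * denq d => e.
have : (v %| A * u ^+ 3)%Z.
  have -> : A * u ^+ 3 = - (v * (numq b * denq a * denq c * denq d * u ^+ 2
      + numq c * denq a * denq b * denq d * u * v
      + numq d * denq a * denq b * denq c * v ^+ 2)).
    by apply/eqP; rewrite -subr_eq0 opprK -e; apply/eqP; ring.
  by rewrite rpredN dvdz_mulr.
by rewrite dvdzE abszM abszX Gauss_dvdl // coprimeXr // coprime_sym coprime_num_den.
Qed.

Lemma eisenstein_rev_cubic (l : nat) (A B C E u v : int) :
  prime l -> coprime `|u| `|v| -> ~~ (l %| `|A|)%N -> ~~ (l %| `|E|)%N ->
  l%:Z * (A * u ^+ 3 + B * u ^+ 2 * v + C * u * v ^+ 2) + E * v ^+ 3 != 0.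
Proof.
move=> l_pr cop_uv lA lE; apply/eqP => e.
have l_v : (l %| `|v|)%N.
  have : (l%:Z %| E * v ^+ 3)%Z.
    rewrite (_ : E * v ^+ 3 = - (l%:Z * (A * u ^+ 3 + B * u ^+ 2 * v + C * u * v ^+ 2))).
      by rewrite rpredN dvdz_mulr.
    by apply/eqP; rewrite -subr_eq0 opprK addrC e.
  by rewrite dvdzE abszM abszX Euclid_dvdM // (negbTE lE) Euclid_dvdX // => /andP[].
have l_u : ~~ (l %| `|u|)%N.
  apply/negP => l_u; have : (l %| gcdn `|u| `|v|)%N by rewrite dvdn_gcd l_u l_v.
  by rewrite (eqP cop_uv) dvdn1 => /eqP l1; rewrite l1 in l_pr.
have /dvdzP[w Dv] : (l%:Z %| v)%Z by rewrite dvdzE.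
have l0 : l%:Z != 0 by rewrite eqz_nat -lt0n prime_gt0.
have /eqP : l%:Z * (A * u ^+ 3
    + l%:Z * (B * u ^+ 2 * w + l%:Z * (C * u * w ^+ 2 + E * w ^+ 3))) = 0.
  by rewrite -e Dv; ring.
rewrite mulf_eq0 (negbTE l0) /= addr_eq0 => /eqP eA.
have : (l%:Z %| A * u ^+ 3)%Z by rewrite eA rpredN dvdz_mulr.
by rewrite dvdzE abszM abszX Euclid_dvdM // (negbTE lA) Euclid_dvdX // (negbTE l_u).
Qed.

Lemma no_root_const_coef (a b c : rat) (l M : nat) : a != 0 -> prime l ->
  (`|numq a| + `|denq a| + `|denq b| + `|denq c| < l)%N ->
  forall r, ~~ root (cubic a b c (M%:R + l%:R^-1)) r.
Proof.
move=> a0 l_pr l_big r; have l_gt0 := prime_gt0 l_pr.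
have cop : coprime `|(M * l + 1)%N%:Z| `|l%:Z| by rewrite /coprime gcdnC gcdnMDl gcdn1.
have -> : M%:R + l%:R^-1 = (M * l + 1)%:R / l%:R :> rat.
  by rewrite natrD natrM; field; rewrite pnatr_eq0 -lt0n.
apply/negP => /root_cubic_clear.
rewrite (coprimeq_num (n := (M * l + 1)%:Z) (d := l%:Z)) //.
rewrite (coprimeq_den (n := (M * l + 1)%:Z) (d := l%:Z)) //.
rewrite eqz_nat (gtn_eqF l_gt0) gtr0_sg ?ltz_nat // mul1r => e.
have l_ndvd n : (0 < n < l)%N -> ~~ (l %| n)%N by case/andP=> n0 nl; rewrite gtnNdvd.
apply: (negP (@eisenstein_rev_cubic l (numq a * denq b * denq c)
  (numq b * denq a * denq c) (numq c * denq a * denq b)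
  ((M * l + 1)%N%:Z * denq a * denq b * denq c) _ _ l_pr (coprime_num_den r) _ _)).
- rewrite !abszM !Euclid_dvdM // !negb_or !l_ndvd ?absz_gt0 ?numq_eq0 ?denq_neq0 //;
  lia.
- rewrite !abszM !Euclid_dvdM // !negb_or /= dvdn_addr ?dvdn_mull // dvdn1.
  rewrite (gtn_eqF (prime_gt1 l_pr)) !l_ndvd ?absz_gt0 ?denq_neq0 //; lia.
- by rewrite -e; apply/eqP; ring.
Qed.

Lemma disc_lt0_large_const (R : realFieldType) (a b c : R) : a != 0 ->
  exists B, forall d, B <= d -> disc a b c d < 0.
Proof.
move=> a0; pose s := 27%:R * a ^+ 2; pose be := 18%:R * a * b * c - 4%:R * b ^+ 3.
pose ga := b ^+ 2 * c ^+ 2 - 4%:R * a * c ^+ 3.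
have s_gt0 : 0 < s by rewrite mulr_gt0 ?ltr0n // exprn_even_gt0.
exists (1 + (`|be| + `|ga|) / s) => d d_big.
have -> : disc a b c d = - s * d ^+ 2 + be * d + ga by rewrite /disc /s /be /ga; ring.
have d1 : 1 <= d.
  by apply: le_trans d_big; rewrite lerDl divr_ge0 ?addr_ge0 // ltW.
have sd : `|be| + `|ga| <= s * (d - 1) by rewrite mulrC -ler_pdivrMr // lerBrDl.
have f1 : 0 <= d * (s * (d - 1) - (`|be| + `|ga|)).
  by rewrite mulr_ge0 ?subr_ge0 // (le_trans ler01).
have f2 : 0 <= (`|be| - be) * d by rewrite mulr_ge0 ?subr_ge0 ?ler_norm // (le_trans ler01).
have f3 : 0 <= `|ga| * (d - 1) by rewrite mulr_ge0 ?subr_ge0.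
have f4 : 0 < s * d by rewrite mulr_gt0 // (lt_le_trans ltr01).
by have := ler_norm ga; lra.
Qed.

Lemma exists_const_coef (a b c : rat) : a != 0 -> exists d, winning_cubic a b c d.
Proof.
move=> a0; have [B dB] := disc_lt0_large_const b c a0.
have [l l_big l_pr] := prime_above (`|numq a| + `|denq a| + `|denq b| + `|denq c|).
pose N := Num.bound `|B|; have BN : B < N%:R.
  by apply: le_lt_trans (ler_norm B) (archi_boundP (normr_ge0 B)).
exists (N%:R + l%:R^-1); split; [exact: a0 | exact: no_root_const_coef |].
by apply/dB/ltW; apply: lt_le_trans BN _; rewrite lerDl invr_ge0 ler0n.
Qed.

Lemma exists_lead_coef (b c d : rat) : d != 0 -> exists a, winning_cubic a b c d.
Proof. by move=> /(exists_const_coef c b)[a /winning_cubic_rev]; exists a. Qed.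

Lemma int_sqr_ge1 (z : int) : z != 0 -> 1 <= z ^+ 2.
Proof. by move=> z0; rewrite expr2; nia. Qed.

Lemma mulr_numq_gt0 (a : rat) : a != 0 -> 0 < a * (numq a)%:~R.
Proof. by move=> a0; rewrite numqE mulrA -expr2 mulr_gt0 ?exprn_even_gt0 ?ltr0z ?denq_gt0. Qed.

Lemma root_cubic_sqr_le (R : realDomainType) (a c d r : R) :
  0 <= a * c -> root (cubic a 0 c d) r -> (r * c) ^+ 2 <= d ^+ 2.
Proof.
rewrite /root horner_cubic => ac /eqP pr.
have -> : d = - r * (a * r ^+ 2 + c) by rewrite -[d]subr0 -pr; ring.
have := mulr_ge0 ac (sqr_ge0 (r ^+ 2)); have := sqr_ge0 (a * r ^+ 3); nra.
Qed.

Lemma no_root_linear_coef (a d : rat) (n : nat) : a != 0 -> d != 0 ->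
  (`|numq d| < n)%N -> forall r, ~~ root (cubic a 0 (numq a * n%:Z)%:~R d) r.
Proof.
move=> a0 d0 n_big r; apply/negP => pr; set c := (numq a * n%:Z)%:~R in pr.
have [k Dk] : exists k, numq a * denq d = k * denq r.
  apply/dvdzP; have := denq_root_cubic_dvd pr.
  by rewrite -[0]/(0%:Q) !denq_int !mulr1.
have k0 : k != 0.
  have : numq a * denq d != 0 by rewrite mulf_neq0 ?numq_eq0 ?denq_neq0.
  by rewrite Dk mulf_eq0 negb_or => /andP[].
have u0 : numq r != 0.
  rewrite numq_eq0; apply: contra_neq d0 => r0.
  by move: pr; rewrite r0 /root horner_cubic0 => /eqP.
have rc_eq : r * c * (denq d)%:~R = (k * numq r * n%:Z)%:~R.
  have e : (numq a)%:~R * (denq d)%:~R = k%:~R * (denq r)%:~R :> rat by rewrite -!intrM Dk.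
  rewrite /c !intrM (numqE r); transitivity (r * n%:~R * ((numq a)%:~R * (denq d)%:~R)).
    by ring.
  by rewrite e; ring.
have : ((k * numq r * n%:Z) ^+ 2)%:~R <= ((numq d) ^+ 2)%:~R :> rat.
  rewrite !rmorphXn /= -rc_eq numqE !exprMn -exprMn ler_wpM2r ?sqr_ge0 //.
  apply: root_cubic_sqr_le pr; apply: ltW.
  by rewrite /c intrM mulrA mulr_gt0 ?mulr_numq_gt0 // ltr0z ltz_nat (leq_ltn_trans _ n_big).
rewrite ler_int !exprMn; apply/negP; rewrite -ltNge.
have nd_n : numq d ^+ 2 < n%:Z ^+ 2.
  by rewrite -real_normK ?num_real // ltrXn2r // -abszE ltz_nat.
have ku : 1 <= k ^+ 2 * numq r ^+ 2 by rewrite mulr_ege1 ?int_sqr_ge1.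
by apply: lt_le_trans nd_n (ler_peMl (sqr_ge0 _) ku).
Qed.

Lemma exists_linear_coef (a d : rat) : a != 0 -> d != 0 -> exists c, winning_cubic a 0 c d.
Proof.
move=> a0 d0; pose n := (`|numq d|).+1; exists (numq a * n%:Z)%:~R.
split; [exact: a0 | exact: no_root_linear_coef |].
set c := (numq a * n%:Z)%:~R; have ac : 0 < a * c.
  by rewrite /c intrM mulrA mulr_gt0 ?mulr_numq_gt0 ?ltr0z.
have -> : disc a 0 c d = - (4%:R * (a * c) * c ^+ 2) - 27%:R * (a * d) ^+ 2.
  by rewrite /disc; ring.
have c0 : c != 0 by apply: contraTneq ac => ->; rewrite mulr0 ltxx.
have : 0 < 4%:R * (a * c) * c ^+ 2.
  by rewrite mulr_gt0 ?exprn_even_gt0 ?c0 ?orbT // mulr_gt0 ?ltr0n.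
by have := sqr_ge0 (a * d); lra.
Qed.

Definition cubic_state (a b c d : rat) : state := fun i => Some [:: d; c; b; a]`_i.

Lemma eq_state_poly (s1 s2 : state) : s1 =1 s2 -> state_poly s1 = state_poly s2.
Proof. by move=> e; apply: eq_bigr => i _; rewrite e. Qed.

Lemma state_poly_cubic_state (a b c d : rat) :
  state_poly (cubic_state a b c d) = cubic a b c d.
Proof. by rewrite /state_poly !big_ord_recl big_ord0 /= /cubic; ring. Qed.

Lemma winning_last_move (s : state) (i : 'I_4) (x a b c d : rat) :
  s i = None -> play s i x =1 cubic_state a b c d -> winning_cubic a b c d ->
  legal_move s i x /\ ~ has_root_in_abelian_ext (state_poly (play s i x)).
Proof.
move=> si e win; rewrite (eq_state_poly e) state_poly_cubic_state.
split; last exact: winning_cubic_no_abelian_root.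
have [[a0 _ _] [d0 _ _]] := (win, winning_cubic_rev win).
split=> // i03; move: (e i); rewrite /play eqxx => -[->].
by case: i i03 {si e} => -[|[|[|[|]]]].
Qed.

Theorem lemma15 :
  forall (i1 : 'I_4) (c1 : rat), legal_move init_state i1 c1 ->
  let s1 := play init_state i1 c1 in
  exists (i2 : 'I_4) (c2 : rat), legal_move s1 i2 c2 /\
  let s2 := play s1 i2 c2 in
  forall (i3 : 'I_4) (c3 : rat), legal_move s2 i3 c3 ->
  let s3 := play s2 i3 c3 in
  exists (i4 : 'I_4) (c4 : rat), legal_move s3 i4 c4 /\
  ~ has_root_in_abelian_ext (state_poly (play s3 i4 c4)).
Proof.
move=> i1 c1 [_ c1P]; cbv zeta; case: i1 c1P => -[|[|[|[|//]]]] ? c1P.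
- exists (@Ordinal 4 2 isT), 0; split=> // i3 c3 [+ c3P].
  case: i3 c3P => -[|[|[|[|//]]]] ? c3P //= _.
  + have [a win] := exists_lead_coef 0 c3 (c1P isT).
    by exists (@Ordinal 4 3 isT), a; apply: winning_last_move win => // -[[|[|[|[|]]]]].
  + have [c win] := exists_linear_coef (c3P isT) (c1P isT).
    by exists (@Ordinal 4 1 isT), c; apply: winning_last_move win => // -[[|[|[|[|]]]]].
- exists (@Ordinal 4 2 isT), 0; split=> // i3 c3 [+ c3P].
  case: i3 c3P => -[|[|[|[|//]]]] ? c3P //= _.
  + have [a win] := exists_lead_coef 0 c1 (c3P isT).
    by exists (@Ordinal 4 3 isT), a; apply: winning_last_move win => // -[[|[|[|[|]]]]].
  + have [d win] := exists_const_coef 0 c1 (c3P isT).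
    by exists (@Ordinal 4 0 isT), d; apply: winning_last_move win => // -[[|[|[|[|]]]]].
- exists (@Ordinal 4 1 isT), 0; split=> // i3 c3 [+ c3P].
  case: i3 c3P => -[|[|[|[|//]]]] ? c3P //= _.
  + have [a win] := exists_lead_coef c1 0 (c3P isT).
    by exists (@Ordinal 4 3 isT), a; apply: winning_last_move win => // -[[|[|[|[|]]]]].
  + have [d win] := exists_const_coef c1 0 (c3P isT).
    by exists (@Ordinal 4 0 isT), d; apply: winning_last_move win => // -[[|[|[|[|]]]]].
- exists (@Ordinal 4 2 isT), 0; split=> // i3 c3 [+ c3P].
  case: i3 c3P => -[|[|[|[|//]]]] ? c3P //= _.
  + have [c win] := exists_linear_coef (c1P isT) (c3P isT).
    by exists (@Ordinal 4 1 isT), c; apply: winning_last_move win => // -[[|[|[|[|]]]]].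
  + have [d win] := exists_const_coef 0 c3 (c1P isT).
    by exists (@Ordinal 4 0 isT), d; apply: winning_last_move win => // -[[|[|[|[|]]]]].
Qed.
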